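(* Let $q\in(0,1]$. Assume: [A6] for every $j\in\mathcal J^{(0)}$, $(\xi_T^j)^{-1/q}|\alpha_T^j|^{-1}\to0$ in probability as $T\to\infty$; [A7$'$] for some $R>0$: (i) for every $T\in\mathbb T$, $\mathbb H_T$ is almost surely thrice differentiable in $\theta$ on $B=\{\theta\in\Theta:|\theta-\theta^*|<R\}$; (ii) $\|a_T\|\,\partial_\theta\mathbb H_T(\theta^* )=O_p(1)$; (iii) $\|a_T\|^2\sup_{\theta\in B}|\partial_\theta^2\mathbb H_T(\theta)|=O_p(1)$; (iv) $\|a_T\|^2\sup_{\theta\in B}|\partial_\theta^3\mathbb H_T(\theta)|=O_p(1)$, as $T\to\infty$. Then [A7] holds: for every $M>0$, $$\sup_{\substack{u,v\in\mathbb U_T,\ |u|,|v|<M,\ u\neq v}}\frac{|\mathbb H_T(\theta^*+a_Tu)-\mathbb H_T(\theta^*+a_Tv)|}{|u-v|^q}\,\|G_T^{(00)}\|^q\to0$$ in probability as $T\to\infty$.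
   Context: Let $\Theta\subset\mathbb R^{\mathsf p}$ be a bounded open set with closure $\overline\Theta$ and $\theta^*\in\Theta$. Let $(\Omega,\mathcal F,P)$ be a probability space, $\mathbb T\subset\mathbb R_{\ge0}$ with $\sup\mathbb T=\infty$; limits $T\to\infty$ are along $\mathbb T$. For each $T\in\mathbb T$, $\mathbb H_T:\Omega\times\overline\Theta\to\mathbb R$ is a random field continuous in $\theta$ for every $\omega$. $\xi_T^j>0$ ($j=1,\dots,\mathsf p$) are (possibly random) positive quantities (the penalty weights). $\mathcal J^{(0)}=\{j:\theta^*_j=0\}$, $\mathcal J^{(1)}=\{j:\theta^*_j\ne0\}$; for a matrix $A$, $A^{(00)}=(A_{ij})_{i,j\in\mathcal J^{(0)}}$. $a_T=\mathrm{diag}(\alpha_T^1,\dots,\alpha_T^{\mathsf p})$ is a deterministic invertible diagonal matrix with $\|a_T\|\to0$, $\|A\|$ denoting the spectral norm. $\mathbb U_T=\{u:\theta^*+a_Tu\in\overline\Theta\}$. $\tilde a_T$ is the diagonal matrix with $(\tilde a_T)_{jj}=(\xi_T^j)^{-1/q}$ for $j\in\mathcal J^{(0)}$ and $(\tilde a_T)_{jj}=\alpha_T^j$ for $j\in\mathcal J^{(1)}$, and $G_T=a_T^{-1}\tilde a_T$. $\partial_\theta^k\mathbb H_T$ denotes the $k$-th derivative tensor in $\theta$. *)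

From HB Require Import structures.
From mathcomp Require Import all_boot all_order all_algebra.
From mathcomp Require Import all_classical all_reals all_analysis.
Set Implicit Arguments. Unset Strict Implicit. Unset Printing Implicit Defensive.
Import Order.TTheory GRing.Theory Num.Theory.
Import numFieldNormedType.Exports.
Local Open Scope classical_set_scope.
Local Open Scope ring_scope.

Section Defs.
Variable R : realType.

Definition enorm (p : nat) (x : 'cV[R]_p) : R :=
  Num.sqrt (\sum_(i < p) (x i 0) ^+ 2).

Definition opnorm (m n : nat) (A : 'M[R]_(m, n)) : R :=
  sup [set enorm (A *m x) | x in [set x : 'cV[R]_n | enorm x <= 1]].

(* the (00)-block A^{(00)} = (A_ij)_{i,j in J}, realised as the p x p matrix
   padded with zeros outside J x J (same spectral norm) *)
Definition block00 (p : nat) (J : set 'I_p) (A : 'M[R]_p) : 'M[R]_p :=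
  \matrix_(i, j) (if `[< J i /\ J j >] then A i j else 0).

Definition diagm (p : nat) (d : 'I_p -> R) : 'M[R]_p := diag_mx (\row_j d j).

Definition partial (p : nat) (j : 'I_p) (f : 'cV[R]_p -> R^o) : 'cV[R]_p -> R^o :=
  fun x => 'D_(delta_mx j 0) f x.

Definition thrice_diff_on (p : nat) (B : set 'cV[R]_p) (f : 'cV[R]_p -> R^o) :=
  forall x, B x ->
    [/\ differentiable f x,
        forall i, differentiable (partial i f) x &
        forall i j, differentiable (partial j (partial i f)) x].

Definition d1norm (p : nat) (f : 'cV[R]_p -> R^o) (x : 'cV[R]_p) : R :=
  Num.sqrt (\sum_(i < p) (partial i f x) ^+ 2).
Definition d2norm (p : nat) (f : 'cV[R]_p -> R^o) (x : 'cV[R]_p) : R :=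
  Num.sqrt (\sum_(i < p) \sum_(j < p) (partial j (partial i f) x) ^+ 2).
Definition d3norm (p : nat) (f : 'cV[R]_p -> R^o) (x : 'cV[R]_p) : R :=
  Num.sqrt (\sum_(i < p) \sum_(j < p) \sum_(k < p)
              (partial k (partial j (partial i f)) x) ^+ 2).

Context (d : measure_display) (Omega : measurableType d) (P : probability Omega R).

Definition outer_lt (E : set Omega) (delta : R) : Prop :=
  exists A, [/\ measurable A, E `<=` A & (P A < delta%:E)%E].

Definition cvg0_in_prob (TT : set R) (X : R -> Omega -> \bar R) : Prop :=
  forall eps delta : R, 0 < eps -> 0 < delta ->
    exists T0 : R, forall T, TT T -> T0 <= T ->
      outer_lt [set w | (eps%:E < `|X T w|)%E] delta.

Definition bounded_in_prob (TT : set R) (X : R -> Omega -> \bar R) : Prop :=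
  forall delta : R, 0 < delta ->
    exists K T0 : R, forall T, TT T -> T0 <= T ->
      outer_lt [set w | (K%:E < `|X T w|)%E] delta.

End Defs.

(* When ||a_T|| M is small, the points theta_star + a_T u with |u| < M stay in a small
   sup-norm ball around theta_star contained in B.  The mean value theorem, applied to
   H_T and to its partial derivatives on that ball, gives
     |H_T(theta_star + a_T u) - H_T(theta_star + a_T v)| <= p |u - v| (K1 + p M K2)
   as soon as ||a_T|| |dH_T(theta_star)| <= K1 and ||a_T||^2 sup_B |d^2 H_T| <= K2; as
   q <= 1, |u - v|^(1-q) stays bounded, so by [A7'](ii),(iii) the supremum of the
   Hoelder ratios is O_p(1).  The matrix G_T^(00) is diagonal with entries
   (xi_T^j)^(-1/q) / alpha_T^j for j in J^(0), so ||G_T^(00)||^q = o_p(1) by [A6], and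
   O_p(1) o_p(1) = o_p(1). *)

From HB Require Import structures.
From mathcomp Require Import all_boot all_order all_algebra.
From mathcomp Require Import all_classical all_reals all_analysis.
Import Order.TTheory GRing.Theory Num.Theory.
Import numFieldNormedType.Exports.
Local Open Scope classical_set_scope.
Local Open Scope ring_scope.
From mathcomp Require Import ring lra.
Set Implicit Arguments. Unset Strict Implicit. Unset Printing Implicit Defensive.

Section vector_norms.
Variables (R : realType) (p : nat).
Implicit Types x : 'cV[R]_p.

Lemma entry_le_mx_norm m n (A : 'M[R]_(m, n)) i j : `|A i j| <= `|A|.
Proof.
by rewrite [leRHS]/Num.Def.normr /= mx_normrE; apply/bigmax_geP; right; exists (i, j).
Qed.

Lemma mx_norm_le m n (A : 'M[R]_(m, n)) (r : R) :
  0 <= r -> (forall i j, `|A i j| <= r) -> `|A| <= r.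
Proof.
by move=> r_ge0 Ar; rewrite [leLHS]/Num.Def.normr /= mx_normrE; apply: bigmax_le => // -[i j].
Qed.

Lemma abs_le_sqrt_sum_sqr (I : finType) (F : I -> R) i :
  `|F i| <= Num.sqrt (\sum_k F k ^+ 2).
Proof.
have sq_ge0 k : 0 <= F k ^+ 2 by exact: sqr_ge0.
rewrite -sqrtr_sqr ler_sqrt; last exact: sumr_ge0.
by rewrite (bigD1 i) //= lerDl sumr_ge0.
Qed.

Lemma enorm_ge0 x : 0 <= enorm x.
Proof. exact: sqrtr_ge0. Qed.

Lemma mx_norm_le_enorm x : `|x| <= enorm x.
Proof.
apply: (@mx_norm_le _ _ x) => [|i j]; first exact: enorm_ge0.
by rewrite (ord1 j); exact: abs_le_sqrt_sum_sqr (fun k => x k 0) i.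
Qed.

Lemma enorm_le_mx_norm x : enorm x <= p%:R * `|x|.
Proof.
have x_ge0 : 0 <= p%:R * `|x| by rewrite mulr_ge0.
rewrite -(ger0_norm x_ge0) -sqrtr_sqr ler_sqrt ?sqr_ge0 //.
apply: (@le_trans _ _ (\sum_(i < p) `|x| ^+ 2)).
  apply: ler_sum => i _; rewrite -real_normK ?num_real //.
  by rewrite lerXn2r ?nnegrE // entry_le_mx_norm.
rewrite sumr_const card_ord -[_ *+ p]mulr_natl exprMn.
apply: ler_wpM2r; first exact: sqr_ge0.
by rewrite -natrX ler_nat; case: p => // n; exact: leq_pmulr.
Qed.

Lemma enorm0 : enorm (0 : 'cV[R]_p) = 0.
Proof. by rewrite /enorm big1 ?sqrtr0 // => i _; rewrite mxE expr0n. Qed.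

Lemma enorm_scale_delta (c : R) i : enorm (c *: delta_mx i 0 : 'cV[R]_p) = `|c|.
Proof.
rewrite /enorm (bigD1 i) //= big1 ?addr0; first by rewrite !mxE !eqxx mulr1 sqrtr_sqr.
by move=> j /negPf ji; rewrite !mxE ji mulr0 expr0n.
Qed.

Lemma enorm_gt0 x : x != 0 -> 0 < enorm x.
Proof. by rewrite -normr_gt0 => /lt_le_trans; apply; exact: mx_norm_le_enorm. Qed.

End vector_norms.

Section diagonal_matrices.
Variables (R : realType) (p : nat).
Implicit Types (A : 'M[R]_p) (x : 'cV[R]_p) (d e : 'I_p -> R) (J : set 'I_p).

Lemma diagmE d i j : diagm d i j = (d i) *+ (i == j).
Proof. by rewrite /diagm !mxE. Qed.

Lemma mul_diagm_col d x i : (diagm d *m x) i 0 = d i * x i 0.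
Proof. by rewrite /diagm mul_diag_mx !mxE. Qed.

Lemma mulmx_diagm d e : diagm d *m diagm e = diagm (fun i => d i * e i).
Proof. by rewrite /diagm mulmx_diag; congr diag_mx; apply/rowP => i; rewrite !mxE. Qed.

Lemma invmx_diagm d :
  (forall i, d i != 0) -> invmx (diagm d) = diagm (fun i => (d i)^-1).
Proof.
move=> d_neq0; have dV : diagm d *m diagm (fun i => (d i)^-1) = 1%:M.
  by apply/matrixP => i j; rewrite mulmx_diagm !mxE divff.
by rewrite -[RHS](mulKmx (mulmx1_unit dV).1) dV mulmx1.
Qed.

Lemma block00_diagm J d :
  block00 J (diagm d) = diagm (fun i => if `[< J i >] then d i else 0).
Proof.
apply/matrixP => i j; rewrite !mxE /=; have [<-|ij] := eqVneq i j.
  rewrite !mulr1n; case: (asboolP (J i)) => Ji; first by rewrite asboolT.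
  by rewrite asboolF // => -[].
by rewrite !mulr0n; case: ifP.
Qed.

Lemma enorm_diag_mulmx_le A x (m : R) : 0 <= m -> is_diag_mx A ->
  (forall i, `|A i i| <= m) -> enorm (A *m x) <= m * enorm x.
Proof.
move=> m_ge0 /is_diag_mxP A_diag Am.
have Ax i : (A *m x) i 0 = A i i * x i 0.
  rewrite mxE (bigD1 i) //= big1 ?addr0 // => j ji.
  by rewrite A_diag ?mul0r // eq_sym.
rewrite /enorm -[m]ger0_norm // -sqrtr_sqr -sqrtrM ?sqr_ge0 // ler_sqrt.
  rewrite mulr_sumr; apply: ler_sum => i _; rewrite Ax exprMn ler_wpM2r ?sqr_ge0 //.
  by rewrite -[A i i ^+ 2]real_normK ?num_real // lerXn2r ?nnegrE.
by rewrite mulr_ge0 ?sqr_ge0 ?sumr_ge0 // => i _; rewrite sqr_ge0.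
Qed.

Lemma opnorm_diag_itv A (m : R) : 0 <= m -> is_diag_mx A ->
  (forall i, `|A i i| <= m) -> 0 <= opnorm A <= m.
Proof.
move=> m_ge0 A_diag Am.
have im0 : [set enorm (A *m x) | x in [set x | enorm x <= 1]] 0.
  by exists 0; rewrite /= ?mulmx0 enorm0.
have im_ub : ubound [set enorm (A *m x) | x in [set x | enorm x <= 1]] m.
  move=> _ [x /= x1 <-]; apply: le_trans (enorm_diag_mulmx_le _ m_ge0 A_diag Am) _.
  exact: ler_piMr.
apply/andP; split; last by apply: ge_sup => //; exists 0.
by apply: sup_upper_bound => //; split; [exists 0 | exists m].
Qed.

Lemma diagm_entry_le_sum d i : `|diagm d i i| <= \sum_k `|d k|.
Proof. by rewrite diagmE eqxx mulr1n (bigD1 i) //= lerDl sumr_ge0. Qed.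

Lemma opnorm_diagm_ge0 d : 0 <= opnorm (diagm d).
Proof.
have sum_ge0 : 0 <= \sum_k `|d k| by exact: sumr_ge0.
by have /andP[] := opnorm_diag_itv sum_ge0 (diag_mx_is_diag _) (diagm_entry_le_sum d).
Qed.

Lemma opnorm_diagm_ge d i : `|d i| <= opnorm (diagm d).
Proof.
have d_diag : is_diag_mx (diagm d) by exact: diag_mx_is_diag.
apply: sup_upper_bound.
  split; first by exists 0; exists 0; rewrite /= ?mulmx0 enorm0.
  exists (\sum_k `|d k|) => _ [x /= x1 <-].
  have sum_ge0 : 0 <= \sum_k `|d k| by exact: sumr_ge0.
  apply: le_trans (enorm_diag_mulmx_le _ sum_ge0 d_diag (diagm_entry_le_sum d)) _.
  exact: ler_piMr.
exists (delta_mx i 0); first by rewrite /= -[delta_mx _ _]scale1r enorm_scale_delta normr1.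
have -> : diagm d *m delta_mx i 0 = d i *: (delta_mx i 0 : 'cV[R]_p).
  apply/matrixP => k j; rewrite (ord1 j) /diagm mul_diag_mx !mxE.
  by case: eqP => [->|]; rewrite ?mulr1 ?mulr0.
exact: enorm_scale_delta.
Qed.

Lemma opnorm_block00_itv J (alpha s : 'I_p -> R) (m : R) : 0 <= m ->
  (forall i, alpha i != 0) -> (forall j, J j -> `|s j * `|alpha j|^-1| <= m) ->
  0 <= opnorm (block00 J (invmx (diagm alpha) *m diagm s)) <= m.
Proof.
move=> m_ge0 alpha_neq0 sm.
rewrite invmx_diagm // mulmx_diagm block00_diagm.
apply: opnorm_diag_itv => // [|i]; first exact: diag_mx_is_diag.
rewrite diagmE eqxx mulr1n; case: asboolP => [/sm|_]; last by rewrite normr0.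
by rewrite !normrM !normfV normr_id mulrC.
Qed.

End diagonal_matrices.

Section mean_value.
Variables (R : realType) (V : normedModType R).
Implicit Types (f : V -> R^o) (x y z h c : V) (t : R).

Lemma is_derive_line f x h t : differentiable f (x + t *: h) ->
  is_derive t 1 (fun s : R => f (x + s *: h)) ('d f (x + t *: h) h).
Proof.
move=> df.
have E : (fun s : R =>
      s^-1 *: (((fun s : R => f (x + s *: h)) \o shift t) (s *: 1) - f (x + t *: h))) =
    (fun s : R => s^-1 *: ((f \o shift (x + t *: h)) (s *: h) - f (x + t *: h))).
  apply/funext => s /=; congr (_ *: (f _ - _)).
  by rewrite -[s%:A]/(s * 1) mulr1 scalerDl addrCA.
have dv : derivable (fun s : R => f (x + s *: h)) t 1.
  by rewrite /derivable E; exact: diff_derivable.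
by apply: DeriveDef => //; rewrite /derive E -deriveE.
Qed.

Lemma mean_value f y z :
  (forall t : R, 0 <= t <= 1 -> differentiable f (z + t *: (y - z))) ->
  exists2 t, 0 <= t <= 1 & f y - f z = 'd f (z + t *: (y - z)) (y - z).
Proof.
move=> df; set g := fun s : R => f (z + s *: (y - z)).
have dg (t : R) : 0 <= t <= 1 -> is_derive t 1 g ('d f (z + t *: (y - z)) (y - z)).
  by move=> /df; exact: is_derive_line.
have [t t01 E] : exists2 t, t \in `[0, 1]%R & g 1 - g 0 =
    'd f (z + t *: (y - z)) (y - z) * (1 - 0).
  apply: MVT_segment => [|x|]; first exact: ler01.
    by rewrite in_itv /= => /andP[x0 x1]; apply: dg; rewrite !ltW.
  by apply: derivable_within_continuous => x /dg[].
exists t; first by move: t01; rewrite in_itv.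
by move: E; rewrite subr0 mulr1 /g scale1r scale0r addr0 [z + _]addrC subrK.
Qed.

Lemma segment_le_norm c y z (r t : R) :
  `|y - c| <= r -> `|z - c| <= r -> 0 <= t <= 1 -> `|z + t *: (y - z) - c| <= r.
Proof.
move=> yc zc /andP[t0 t1].
have -> : z + t *: (y - z) - c = (1 - t) *: (z - c) + t *: (y - c).
  rewrite [in RHS]scalerBl scale1r -[in RHS]addrA [- _ + _]addrC -scalerBr.
  by rewrite opprB (addrA (y - c)) subrK addrAC.
apply: (le_trans (ler_normD _ _)); rewrite !normrZ !ger0_norm ?subr_ge0 //.
nra.
Qed.

End mean_value.

Section partial_derivatives.
Variables (R : realType) (p : nat).
Implicit Types (f : 'cV[R]_p -> R^o) (x y h u v : 'cV[R]_p).

Lemma diff_sum_partial f x h : differentiable f x ->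
  'd f x h = \sum_i h i 0 * partial i f x.
Proof.
move=> df; rewrite {1}[h]matrix_sum_delta linear_sum; apply: eq_bigr => i _.
by rewrite big_ord1 linearZ /partial deriveE.
Qed.

Lemma norm_diff_le f x h : differentiable f x ->
  `|'d f x h| <= \sum_i `|h i 0| * `|partial i f x|.
Proof.
move=> /diff_sum_partial ->; apply: le_trans (ler_norm_sum _ _ _) _.
by apply: ler_sum => i _; rewrite normrM.
Qed.

Lemma partial_le_on_ball f x0 i (A M K1 K2 : R) w :
  0 <= A -> 0 <= M ->
  (forall y, `|y - x0| <= A * M -> differentiable (partial i f) y) ->
  A * `|partial i f x0| <= K1 ->
  (forall y j, `|y - x0| <= A * M -> A ^+ 2 * `|partial j (partial i f) y| <= K2) ->
  `|w - x0| <= A * M -> A * `|partial i f w| <= K1 + p%:R * M * K2.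
Proof.
move=> A0 M0 dfi fi_x0 d2fi wx0.
have x0x0 : `|x0 - x0| <= A * M by rewrite subrr normr0 mulr_ge0.
have seg_ball (t : R) : 0 <= t <= 1 -> `|x0 + t *: (w - x0) - x0| <= A * M.
  exact: segment_le_norm.
have [t t01 incr] := mean_value (fun t t01 => dfi _ (seg_ball t t01)).
set xi := x0 + t *: (w - x0) in incr.
have -> : partial i f w = partial i f x0 + (partial i f w - partial i f x0).
  by rewrite addrC subrK.
rewrite incr; apply: le_trans (ler_wpM2l A0 (ler_normD _ _)) _.
rewrite mulrDr lerD //; apply: le_trans (ler_wpM2l A0 (norm_diff_le _ _)) _.
  exact/dfi/seg_ball.
rewrite mulr_sumr; apply: le_trans (_ : _ <= \sum_(j < p) M * K2) _; last first.
  by rewrite sumr_const card_ord -[_ *+ p]mulr_natl mulrA.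
apply: (@ler_sum R) => j _.
set b := `|partial j _ xi|.
apply: (@le_trans _ _ (A * (A * M * b))).
  apply: ler_wpM2l => //; apply: ler_wpM2r; first exact: normr_ge0.
  exact: le_trans (entry_le_mx_norm _ _ _) wx0.
have -> : A * (A * M * b) = M * (A ^+ 2 * b) by rewrite /b; ring.
exact/ler_wpM2l/d2fi/seg_ball.
Qed.

Lemma partial_le_d1norm f x i : `|partial i f x| <= d1norm f x.
Proof. exact: abs_le_sqrt_sum_sqr (fun k => partial k f x) i. Qed.

Lemma partial2_le_d2norm f x i j : `|partial j (partial i f) x| <= d2norm f x.
Proof.
rewrite /d2norm pair_big.
exact: abs_le_sqrt_sum_sqr (fun k : 'I_p * 'I_p => partial k.2 (partial k.1 f) x) (i, j).
Qed.
Definition holder_sup f x0 (a : 'M[R]_p) (U : set 'cV[R]_p) (M q : R) : \bar R :=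
  ereal_sup ([set 0%E] `|` [set r | exists u v : 'cV[R]_p,
    [/\ U u /\ U v, (enorm u < M)%R /\ (enorm v < M)%R, u <> v &
     r = (`|f (x0 + a *m u) - f (x0 + a *m v)| / (enorm (u - v)) `^ q)%:E]]).

Section diagonal_scaling.
Variables (f : 'cV[R]_p -> R^o) (x0 : 'cV[R]_p) (alpha : 'I_p -> R) (A M K1 K2 : R).
Hypotheses (A_ge0 : 0 <= A) (M_ge0 : 0 <= M) (alpha_le : forall i, `|alpha i| <= A).
Hypothesis f_diff : forall y, `|y - x0| <= A * M ->
  differentiable f y /\ forall i, differentiable (partial i f) y.
Hypothesis d1f : forall i, A * `|partial i f x0| <= K1.
Hypothesis d2f : forall y i j, `|y - x0| <= A * M ->
  A ^+ 2 * `|partial j (partial i f) y| <= K2.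

Lemma mx_norm_diagm_mul_le u : `|u| <= M -> `|diagm alpha *m u| <= A * M.
Proof.
move=> uM; apply: mx_norm_le => [|i j]; first exact: mulr_ge0.
rewrite (ord1 j) mul_diagm_col normrM.
by apply: ler_pM => //; apply: le_trans (entry_le_mx_norm _ _ _) uM.
Qed.

Lemma diag_increment_le u v : `|u| <= M -> `|v| <= M ->
  `|f (x0 + diagm alpha *m u) - f (x0 + diagm alpha *m v)|
    <= p%:R * `|u - v| * (K1 + p%:R * M * K2).
Proof.
move=> uM vM; set y := x0 + _ *m u; set z := x0 + _ *m v.
have ball_scaled w : `|w| <= M -> `|x0 + diagm alpha *m w - x0| <= A * M.
  by move=> wM; rewrite addrC addKr mx_norm_diagm_mul_le.
have seg_ball (t : R) : 0 <= t <= 1 -> `|z + t *: (y - z) - x0| <= A * M.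
  by apply: segment_le_norm; apply: ball_scaled.
have [t t01 ->] := mean_value (fun t t01 => (f_diff (seg_ball t t01)).1).
apply: le_trans (norm_diff_le _ _) _; first exact: (f_diff (seg_ball t t01)).1.
apply: le_trans (_ : _ <= \sum_(i < p) `|u - v| * (K1 + p%:R * M * K2)) _; last first.
  by rewrite sumr_const card_ord -[_ *+ p]mulr_natl mulrA.
apply: (@ler_sum R) => i _.
have -> : (y - z) i 0 = alpha i * (u - v) i 0.
  by rewrite /y /z opprD addrACA subrr add0r -mulmxBr mul_diagm_col.
rewrite normrM mulrAC mulrC; apply: ler_pM => //.
  exact: le_trans (entry_le_mx_norm _ _ _) _.
apply: le_trans (ler_wpM2r (normr_ge0 _) (alpha_le i)) _.
apply: partial_le_on_ball => //; last exact: seg_ball.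
  by move=> w /f_diff[].
by move=> w j /d2f.
Qed.

Lemma diag_holder_ratio_le (q : R) u v : 0 < q <= 1 -> 0 <= K1 -> 0 <= K2 ->
  `|u| <= M -> `|v| <= M -> u != v ->
  `|f (x0 + diagm alpha *m u) - f (x0 + diagm alpha *m v)| / enorm (u - v) `^ q
    <= p%:R * (p%:R * (2 * M)) `^ (1 - q) * (K1 + p%:R * M * K2).
Proof.
move=> /andP[q_gt0 q_le1] K1_ge0 K2_ge0 uM vM uv.
set K := K1 + _; have K_ge0 : 0 <= K by rewrite addr_ge0 // !mulr_ge0.
set e := enorm (u - v); have e_gt0 : 0 < e by rewrite enorm_gt0 // subr_eq0.
have e_le : e <= p%:R * (2 * M).
  apply: le_trans (enorm_le_mx_norm _) _; apply: ler_wpM2l => //.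
  by rewrite mulr2n mulrDl mul1r (le_trans (ler_normB _ _)) ?lerD.
have e_ratio : e / e `^ q = e `^ (1 - q).
  by rewrite powRB ?powRr1 ?ltW // (gt_eqF e_gt0) implybT.
apply: le_trans (ler_wpM2r _ (diag_increment_le uM vM)) _.
  by rewrite invr_ge0 powR_ge0.
apply: le_trans (_ : p%:R * e * K / e `^ q <= _).
  apply: ler_wpM2r; first by rewrite invr_ge0 powR_ge0.
  by rewrite ler_wpM2r // ler_wpM2l // mx_norm_le_enorm.
rewrite mulrAC -[p%:R * e / _]mulrA e_ratio; apply/ler_wpM2r/ler_wpM2l => //.
by apply: ge0_ler_powR; rewrite ?subr_ge0 ?nnegrE ?(ltW e_gt0) ?mulr_ge0.
Qed.

Lemma holder_sup_ge0 U (q : R) : (0 <= holder_sup f x0 (diagm alpha) U M q)%E.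
Proof. by apply: ereal_sup_ubound; left. Qed.

Lemma holder_sup_le U (q : R) : 0 < q <= 1 -> 0 <= K1 -> 0 <= K2 ->
  (holder_sup f x0 (diagm alpha) U M q <=
   (p%:R * (p%:R * (2 * M)) `^ (1 - q) * (K1 + p%:R * M * K2))%:E)%E.
Proof.
move=> q01 K1_ge0 K2_ge0.
apply: ge_ereal_sup => _ [-> | [u [v [_ [uM vM] uv ->]]]].
  by rewrite lee_fin mulr_ge0 ?addr_ge0 ?mulr_ge0 ?powR_ge0.
rewrite lee_fin diag_holder_ratio_le //; last exact/eqP.
  exact: le_trans (mx_norm_le_enorm _) (ltW uM).
exact: le_trans (mx_norm_le_enorm _) (ltW vM).
Qed.

End diagonal_scaling.

End partial_derivatives.

Section outer_probability.
Context (R : realType) (d : measure_display) (Omega : measurableType d).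
Variable P : probability Omega R.
Implicit Types (E F N : set Omega) (delta : R).

Lemma outer_lt_sub E F delta : E `<=` F -> outer_lt P F delta -> outer_lt P E delta.
Proof. by move=> EF [A [mA FA PA]]; exists A; split => //; apply: subset_trans FA. Qed.

Lemma outer_ltU E F (d1 d2 : R) :
  outer_lt P E d1 -> outer_lt P F d2 -> outer_lt P (E `|` F) (d1 + d2).
Proof.
move=> [A [mA EA PA]] [B [mB FB PB]]; exists (A `|` B); split.
- exact: measurableU.
- exact: setUSS.
- by apply: le_lt_trans (measureU2 P mA mB) _; rewrite EFinD lteD.
Qed.

Lemma outer_lt_null N delta :
  measurable N -> P N = 0%E -> 0 < delta -> outer_lt P N delta.
Proof. by move=> mN PN delta_gt0; exists N; split => //; rewrite PN lte_fin. Qed.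

Lemma outer_lt_setU_null N E delta : measurable N -> P N = 0%E ->
  outer_lt P E delta -> outer_lt P (N `|` E) delta.
Proof.
move=> mN PN [A [mA EA PA]]; exists (N `|` A); split.
- exact: measurableU.
- exact: setUS.
- apply: le_lt_trans (measureU2 P mN mA) _.
  by rewrite [X in (X + _)%E](_ : _ = 0%E) ?add0e.
Qed.

Variable TT : set R.

Definition vanishing_in_prob (E : R -> set Omega) :=
  forall delta, 0 < delta ->
    exists T0 : R, forall T, TT T -> T0 <= T -> outer_lt P (E T) delta.

Lemma vanishing_in_prob_sub (E F : R -> set Omega) :
  (forall T, TT T -> E T `<=` F T) -> vanishing_in_prob F -> vanishing_in_prob E.
Proof.
move=> EF F0 delta /F0[T0 FT]; exists T0 => T TT_T T0T.
exact: outer_lt_sub (EF T TT_T) (FT T TT_T T0T).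
Qed.

Lemma vanishing_in_probU (E F : R -> set Omega) :
  vanishing_in_prob E -> vanishing_in_prob F -> vanishing_in_prob (fun T => E T `|` F T).
Proof.
move=> E0 F0 delta delta_gt0.
have [|T1 ET] := E0 (delta / 2); first by rewrite divr_gt0.
have [|T2 FT] := F0 (delta / 2); first by rewrite divr_gt0.
exists (Num.max T1 T2) => T TT_T; rewrite ge_max => /andP[T1T T2T].
by rewrite (splitr delta); apply: outer_ltU; [exact: ET | exact: FT].
Qed.

Lemma vanishing_in_prob_bigcup (I : finType) (J : set I) (E : R -> I -> set Omega) :
  (forall i, J i -> vanishing_in_prob (E ^~ i)) ->
  vanishing_in_prob (fun T => \bigcup_(i in J) E T i).
Proof.
move=> EJ; suff: forall s : seq I,
    vanishing_in_prob (fun T => \bigcup_(i in [set i | i \in s /\ J i]) E T i).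
  move/(_ (enum I)); apply: vanishing_in_prob_sub => T _ w [i Ji Ew].
  by exists i => //; split; rewrite ?mem_enum.
elim => [|i s IH].
  move=> delta delta_gt0; exists 0 => T _ _.
  by apply: outer_lt_sub (outer_lt_null measurable0 (measure0 P) delta_gt0) => w [j []].
have [Ji|NJi] := pselect (J i).
  apply: vanishing_in_prob_sub (vanishing_in_probU (EJ i Ji) IH) => T _ w [j [+ Jj] Ew].
  by rewrite in_cons => /orP[/eqP ji|js]; [left; rewrite -ji | right; exists j].
apply: vanishing_in_prob_sub IH => T _ w [j [+ Jj] Ew].
by rewrite in_cons => /orP[/eqP ji|js]; [move: Jj; rewrite ji | exists j].
Qed.

Lemma cvg0_in_probP (X : R -> Omega -> \bar R) : cvg0_in_prob P TT X <->
  forall eps, 0 < eps -> vanishing_in_prob (fun T => [set w | (eps%:E < `|X T w|)%E]).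
Proof. by split=> X0 eps delta; [move=> ? ?| move=> ?]; apply: X0. Qed.

Lemma bounded_in_prob_ge0 (X : R -> Omega -> \bar R) : bounded_in_prob P TT X ->
  forall delta, 0 < delta -> exists2 K : R, 0 <= K & exists T0 : R,
    forall T, TT T -> T0 <= T -> outer_lt P [set w | (K%:E < `|X T w|)%E] delta.
Proof.
move=> Xb delta /Xb[K [T0 XK]]; exists (Num.max K 0); first by rewrite le_max lexx orbT.
exists T0 => T TT_T T0T; apply: outer_lt_sub (XK T TT_T T0T) => w /=.
by apply: le_lt_trans; rewrite lee_fin le_max lexx ?orTb.
Qed.

Lemma cvg0_in_prob_mul (X Y : R -> Omega -> \bar R) :
  bounded_in_prob P TT X -> cvg0_in_prob P TT Y ->
  cvg0_in_prob P TT (fun T w => (X T w * Y T w)%E).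
Proof.
move=> /bounded_in_prob_ge0 Xb /cvg0_in_probP Y0; apply/cvg0_in_probP => eps eps_gt0.
have K1_gt0 (K : R) : 0 <= K -> 0 < K + 1 by move=> ?; rewrite ltr_wpDl.
move=> delta delta_gt0.
have [|K K_ge0 [T1 XK]] := Xb (delta / 2); first by rewrite divr_gt0.
have epsK_gt0 : 0 < eps / (K + 1) by rewrite divr_gt0 ?K1_gt0.
have [|T2 YT] := Y0 _ epsK_gt0 (delta / 2); first by rewrite divr_gt0.
exists (Num.max T1 T2) => T TT_T; rewrite ge_max => /andP[T1T T2T].
rewrite (splitr delta); apply: outer_lt_sub (outer_ltU (XK T TT_T T1T) (YT T TT_T T2T)).
move=> w /= XYeps; have [XK'|XK'] := leP (`|X T w|)%E K%:E; [right | by left].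
rewrite ltNge; apply/negP => YK; move: XYeps; rewrite ltNge => /negP; apply.
rewrite abseM; apply: le_trans (lee_pmul _ _ XK' YK) _; rewrite ?abse_ge0 // -EFinM lee_fin.
rewrite mulrCA; apply: ler_piMr; first exact: ltW.
by rewrite ler_pdivrMr ?K1_gt0 // mul1r lerDl.
Qed.
End outer_probability.

Section holder_sup_bounded.
Context (R : realType) (p : nat) (d : measure_display) (Omega : measurableType d).
Variables (P : probability Omega R) (TT : set R).
Variables (Theta : set 'cV[R]_p) (x0 : 'cV[R]_p) (Rad : R).
Variables (H : R -> Omega -> 'cV[R]_p -> R^o) (alpha : R -> 'I_p -> R).
Hypotheses (Theta_open : open Theta) (Theta_x0 : Theta x0) (Rad_gt0 : 0 < Rad).
Hypothesis scale_vanishing : forall eps : R, 0 < eps ->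
  exists T0 : R, forall T, TT T -> T0 <= T -> opnorm (diagm (alpha T)) < eps.

Let B := [set th | Theta th /\ enorm (th - x0) < Rad].

Hypothesis H_diff : forall T, TT T -> exists N, [/\ measurable N, P N = 0%E &
  forall w, ~ N w -> thrice_diff_on B (H T w)].
Hypothesis H_d1 : bounded_in_prob P TT (fun T w =>
  (opnorm (diagm (alpha T)) * d1norm (H T w) x0)%:E).
Hypothesis H_d2 : bounded_in_prob P TT (fun T w =>
  ((opnorm (diagm (alpha T)) ^+ 2)%:E * ereal_sup [set (d2norm (H T w) th)%:E | th in B])%E).

Let closed_ball_sub_B : exists2 e : R, 0 < e & forall y, `|y - x0| <= e -> B y.
Proof.
have /nbhs_ballP[e0 e0_gt0 e0_Theta] : nbhs x0 Theta by exact: open_nbhs_nbhs.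
have p1_gt0 : 0 < p.+1%:R :> R by [].
exists (Num.min (e0 / 2) (Rad / p.+1%:R)) => [|y]; first by rewrite lt_min !divr_gt0.
rewrite le_min => /andP[ye0 yRad]; split.
  apply: e0_Theta; rewrite -ball_normE /= distrC.
  by apply: le_lt_trans ye0 _; rewrite ltr_pdivrMr // ltr_pMr // ltr1n.
apply: le_lt_trans (enorm_le_mx_norm _) _.
apply: le_lt_trans (ler_wpM2l (ler0n _ _) yRad) _.
by rewrite mulrA ltr_pdivrMr // mulrC ltr_pM2l // ltr_nat.
Qed.

Lemma holder_sup_bounded_in_prob (U : R -> set 'cV[R]_p) (M q : R) :
  0 < q <= 1 -> 0 < M ->
  bounded_in_prob P TT (fun T w => holder_sup (H T w) x0 (diagm (alpha T)) (U T) M q).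
Proof.
move=> q01 M_gt0 delta delta_gt0.
have [e e_gt0 eB] := closed_ball_sub_B.
have [T0 small] := scale_vanishing (divr_gt0 e_gt0 M_gt0).
have delta2_gt0 : 0 < delta / 2 by rewrite divr_gt0.
have [K1 K1_ge0 [T1 E1]] := bounded_in_prob_ge0 H_d1 delta2_gt0.
have [K2 K2_ge0 [T2 E2]] := bounded_in_prob_ge0 H_d2 delta2_gt0.
exists (p%:R * (p%:R * (2 * M)) `^ (1 - q) * (K1 + p%:R * M * K2)).
exists (Num.max T0 (Num.max T1 T2)) => T TT_T; rewrite !ge_max => /and3P[T0T T1T T2T].
have [N [mN PN N_diff]] := H_diff TT_T.
rewrite (splitr delta); apply: outer_lt_sub
  (outer_lt_setU_null mN PN (outer_ltU (E1 T TT_T T1T) (E2 T TT_T T2T))).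
move=> w /=; rewrite ltNge => /negP S_gt; apply: contrapT => /not_orP[].
move=> /N_diff w_diff /not_orP[/negP d1w /negP d2w]; apply: S_gt.
rewrite -leNgt in d1w; rewrite -leNgt in d2w.
set A := opnorm (diagm (alpha T)) in d1w d2w *.
have A_ge0 : 0 <= A := opnorm_diagm_ge0 (alpha T).
have AM_le : A * M <= e.
  by rewrite -(divfK (lt0r_neq0 M_gt0) e) ler_pM2r //; exact/ltW/small.
have ball_B y : `|y - x0| <= A * M -> B y by move=> yx0; apply/eB/(le_trans yx0).
rewrite gee0_abs ?holder_sup_ge0 //.
apply: (holder_sup_le (A := A)) => //; first exact: ltW.
- exact: opnorm_diagm_ge.
- by move=> y /ball_B /w_diff[].
- move=> i; apply: le_trans (ler_wpM2l A_ge0 (partial_le_d1norm _ _ _)) _.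
  by rewrite lee_fin in d1w; exact: le_trans (ler_norm _) d1w.
- move=> y i j /ball_B By.
  apply: le_trans (ler_wpM2l (sqr_ge0 A) (partial2_le_d2norm _ _ _ _)) _.
  rewrite -lee_fin EFinM; apply: le_trans (le_trans (lee_abs _) d2w).
  by apply: lee_wpmul2l; [rewrite lee_fin sqr_ge0 | apply: ereal_sup_ubound; exists y].
Qed.

End holder_sup_bounded.

Section block00_vanishing.
Context (R : realType) (p : nat) (d : measure_display) (Omega : measurableType d).
Variables (P : probability Omega R) (TT : set R).

Lemma opnorm_block00_cvg0_in_prob (J : set 'I_p) (alpha : R -> 'I_p -> R)
    (s : R -> Omega -> 'I_p -> R) (q : R) :
  0 < q -> (forall T j, TT T -> alpha T j != 0) ->
  (forall j, J j -> cvg0_in_prob P TT (fun T w => (s T w j * `|alpha T j|^-1)%:E)) ->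
  cvg0_in_prob P TT (fun T w =>
    (opnorm (block00 J (invmx (diagm (alpha T)) *m diagm (s T w))) `^ q)%:E).
Proof.
move=> q_gt0 alpha_neq0 s0; apply/cvg0_in_probP => eps eps_gt0.
set eta := eps `^ q^-1; have eta_gt0 : 0 < eta by exact: powR_gt0.
have sj j : J j -> vanishing_in_prob P TT
    (fun T => [set w | (eta%:E < `|(s T w j * `|alpha T j|^-1)%:E|)%E]).
  by move=> /s0 /cvg0_in_probP; apply.
apply: vanishing_in_prob_sub (vanishing_in_prob_bigcup sj) => T TT_T w /=.
rewrite ltNge => /negP G_gt; apply: contrapT => s_small; apply: G_gt.
have s_le j : J j -> `|s T w j * `|alpha T j|^-1| <= eta.
  by move=> Jj; rewrite leNgt; apply/negP => s_gt; apply: s_small; exists j.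
have /andP[G_ge0 G_le] := opnorm_block00_itv (ltW eta_gt0) (alpha_neq0 T ^~ TT_T) s_le.
have -> : eps = eta `^ q by rewrite -powRrM mulVf ?gt_eqF // powRr1 // ltW.
rewrite lee_fin ger0_norm ?powR_ge0 //.
by apply: ge0_ler_powR; rewrite ?nnegrE ?(ltW q_gt0) ?(ltW eta_gt0).
Qed.
End block00_vanishing.

Theorem proposition2
  (R : realType) (p : nat)
  (Theta : set 'cV[R]_p) (theta_star : 'cV[R]_p)
  (d : measure_display) (Omega : measurableType d) (P : probability Omega R)
  (TT : set R)
  (H : R -> Omega -> 'cV[R]_p -> R^o)
  (xi : R -> Omega -> 'I_p -> R)
  (alpha : R -> 'I_p -> R)
  (q : R) :
  (* standing assumptions *)
  open Theta -> bounded_set Theta -> Theta theta_star ->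
  TT `<=` [set t | 0 <= t] ->
  (forall x : R, exists2 t, TT t & x < t) ->
  (forall T w, TT T -> {within closure Theta, continuous (H T w)}) ->
  (forall T th, TT T -> measurable_fun setT (fun w => H T w th)) ->
  (forall T w j, TT T -> 0 < xi T w j) ->
  (forall T j, TT T -> measurable_fun setT (fun w => xi T w j)) ->
  (forall T j, TT T -> alpha T j != 0) ->
  (forall eps : R, 0 < eps -> exists T0 : R, forall T, TT T -> T0 <= T ->
      opnorm (diagm (alpha T)) < eps) ->
  0 < q <= 1 ->
  (* [A6] *)
  (forall j : 'I_p, theta_star j 0 = 0 ->
     cvg0_in_prob P TT (fun T w =>
       ((xi T w j `^ (- q^-1)) * `|alpha T j|^-1)%:E)) ->
  (* [A7'] *)
  (exists Rad : R, 0 < Rad /\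
     let B := [set th | Theta th /\ enorm (th - theta_star) < Rad] in
     [/\ (forall T, TT T -> exists N, [/\ measurable N, P N = 0%E &
            forall w, ~ N w -> thrice_diff_on B (H T w)]),
         bounded_in_prob P TT (fun T w =>
            (opnorm (diagm (alpha T)) * d1norm (H T w) theta_star)%:E),
         bounded_in_prob P TT (fun T w =>
            ((opnorm (diagm (alpha T)) ^+ 2)%:E *
             ereal_sup [set (d2norm (H T w) th)%:E | th in B])%E) &
         bounded_in_prob P TT (fun T w =>
            ((opnorm (diagm (alpha T)) ^+ 2)%:E *
             ereal_sup [set (d3norm (H T w) th)%:E | th in B])%E)]) ->
  (* [A7] *)
  forall M : R, 0 < M ->
    cvg0_in_prob P TT (fun T w =>
      let a := diagm (alpha T) in
      let J0 := [set j : 'I_p | theta_star j 0 = 0] in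
      let a_tilde := diagm (fun j => if `[< J0 j >] then xi T w j `^ (- q^-1)
                                     else alpha T j) in
      let G := invmx a *m a_tilde in
      let UT := [set u : 'cV[R]_p | closure Theta (theta_star + a *m u)] in
      (ereal_sup ([set 0%E] `|`
         [set r | exists u v : 'cV[R]_p,
            [/\ UT u /\ UT v, (enorm u < M)%R /\ (enorm v < M)%R, u <> v &
             r = (`|H T w (theta_star + a *m u) - H T w (theta_star + a *m v)|
                   / (enorm (u - v)) `^ q)%:E]])
       * (opnorm (block00 J0 G) `^ q)%:E)%E).
Proof.
move=> Theta_open _ Theta_x0 _ _ _ _ _ _ alpha_neq0 scale_vanishing q01 A6.
move=> [Rad [Rad_gt0 /= [H_diff H_d1 H_d2 _]]] M M_gt0.
have /andP[q_gt0 _] := q01.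
apply: cvg0_in_prob_mul.
  pose U T := [set u | closure Theta (theta_star + diagm (alpha T) *m u)].
  exact: (holder_sup_bounded_in_prob Theta_open Theta_x0 Rad_gt0 scale_vanishing
    H_diff H_d1 H_d2 U q01 M_gt0).
apply: opnorm_block00_cvg0_in_prob => // j J0j.
by rewrite asboolT //; exact: A6.
Qed.
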